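(* Consider the problem $(P_1)$: $\min_{x\in Q}\{f(x):\mathbf{A}x=b\}$, and its dual function $\varphi$. Assume: (i) for some $\nu\in[0,1]$ the subgradients $\nabla\varphi(\lambda)=b-\mathbf{A}x(\lambda)$ used by the algorithm satisfy $\|\nabla\varphi(\lambda)-\nabla\varphi(\lambda')\|_2\le M_\nu\|\lambda-\lambda'\|_2^\nu$ for all $\lambda,\lambda'$, with $M_\nu<\infty$; (ii) the dual problem $\min_{\lambda}\varphi(\lambda)$ has a solution $\lambda^*$ with $\|\lambda^*\|_2\le R$ for some $R>0$; (iii) there is no duality gap: $\min_{x\in Q}\{f(x):\mathbf{A}x=b\}=-\varphi(\lambda^* )$. Let $\varepsilon>0$. Then for every $k\ge1$ the points $\hat x^k\in Q$, $\eta^k$ generated by Algorithm PDUGDsDR satisfy $$\|\mathbf{A}\hat x^k-b\|_2\le\frac{2R}{A_k}+\frac{\varepsilon}{2R},\qquad|\varphi(\eta^k)+f(\hat x^k)|\le\frac{2R^2}{A_k}+\frac\varepsilon2,$$ where $$A_k\ge c_\nu\,\frac{k^{\frac{1+3\nu}{1+\nu}}\varepsilon^{\frac{1-\nu}{1+\nu}}}{2^{\frac{1+3\nu}{1+\nu}}M_\nu^{\frac{2}{1+\nu}}},\qquad c_\nu=\left[\frac{1+\nu}{1-\nu}\right]^{\frac{1-\nu}{1+\nu}}\ (\nu<1),\ c_1=1.$$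
   Context: $E$ is a finite-dimensional real vector space, $Q\subseteq E$ is a closed convex set, $f:Q\to\mathbb{R}$ is convex, $H$ is a finite-dimensional real Euclidean space (identified with its dual $\Lambda=H^*$, with norm $\|\cdot\|_2$), $\mathbf{A}:E\to H$ is linear and $b\in H$. The dual objective (to be minimized) is $$\varphi(\lambda)=\langle\lambda,b\rangle+\max_{x\in Q}\big(-f(x)-\langle\mathbf{A}^T\lambda,x\rangle\big),\quad\lambda\in\Lambda,$$ where it is assumed that the maximum is attained for every $\lambda$; $x(\lambda)$ denotes a maximizer, and $b-\mathbf{A}x(\lambda)$ is then a subgradient of the convex function $\varphi$ at $\lambda$. Algorithm PDUGDsDR (input accuracy $\varepsilon>0$): set $A_0=0$, $\eta^0=\zeta^0=0$. For $k=0,1,2,\dots$: 1. $\beta_k\in\arg\min_{\beta\in[0,1]}\varphi(\zeta^k+\beta(\eta^k-\zeta^k))$, $\lambda^k=\zeta^k+\beta_k(\eta^k-\zeta^k)$. 2. Choose a maximizer $x(\lambda^k)$ such that $g^k:=\nabla\varphi(\lambda^k)=b-\mathbf{A}x(\lambda^k)$ satisfies $\langle g^k,\zeta^k-\lambda^k\rangle\ge0$ (such a choice exists). Let $h_{k+1}\in\arg\min_{h\ge0}\varphi(\lambda^k-hg^k)$ and $\eta^{k+1}=\lambda^k-h_{k+1}g^k$. 3. $a_{k+1}$ is the largest solution of $\varphi(\eta^{k+1})=\varphi(\lambda^k)-\frac{a_{k+1}^2}{2(A_k+a_{k+1})}\|g^k\|_2^2+\frac{\varepsilon a_{k+1}}{2(A_k+a_{k+1})}$;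 $A_{k+1}=A_k+a_{k+1}$. 4. $\zeta^{k+1}=\zeta^k-a_{k+1}g^k$. 5. $\hat x^{k+1}=\frac1{A_{k+1}}\sum_{i=0}^k a_{i+1}x(\lambda^i)$. All minima are assumed attained and $g^k\neq0$ for all iterations considered. *)

From HB Require Import structures.
From mathcomp Require Import all_boot.
From Stdlib Require Import Reals ClassicalEpsilon.
Open Scope R_scope.

(* Coordinate vectors: E ~ R^n, H ~ R^m (standard Euclidean structure). *)
Definition vec (n : nat) := 'I_n -> R.
Definition vzero {n} : vec n := fun _ => 0.
Definition vadd {n} (x y : vec n) : vec n := fun i => x i + y i.
Definition vsub {n} (x y : vec n) : vec n := fun i => x i - y i.
Definition vscale {n} (c : R) (x : vec n) : vec n := fun i => c * x i.
Definition dot {n} (x y : vec n) : R := \big[Rplus/0]_(i < n) (x i * y i).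
Definition norm2 {n} (x : vec n) : R := sqrt (dot x x).

Definition mat (m n : nat) := 'I_m -> 'I_n -> R.
Definition mapply {m n} (A : mat m n) (x : vec n) : vec m :=
  fun i => \big[Rplus/0]_(j < n) (A i j * x j).
Definition mtapply {m n} (A : mat m n) (l : vec m) : vec n :=
  fun j => \big[Rplus/0]_(i < m) (A i j * l i).

Definition powR (x y : R) : R :=
  if Req_EM_T x 0 then (if Req_EM_T y 0 then 1 else 0) else Rpower x y.

Definition convex_set {n} (Q : vec n -> Prop) : Prop :=
  forall x y t, Q x -> Q y -> 0 <= t <= 1 ->
    Q (vadd (vscale t x) (vscale (1 - t) y)).

Definition closed_vset {n} (Q : vec n -> Prop) : Prop :=
  forall (u : nat -> vec n) (x : vec n),
    (forall k, Q (u k)) -> (forall j, Un_cv (fun k => u k j) (x j)) -> Q x.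

Definition convex_on {n} (Q : vec n -> Prop) (f : vec n -> R) : Prop :=
  forall x y t, Q x -> Q y -> 0 <= t <= 1 ->
    f (vadd (vscale t x) (vscale (1 - t) y)) <= t * f x + (1 - t) * f y.

Definition is_maximizer {n} (Q : vec n -> Prop) (g : vec n -> R) (x : vec n) : Prop :=
  Q x /\ forall y, Q y -> g y <= g x.

Definition is_max_value {n} (Q : vec n -> Prop) (g : vec n -> R) (v : R) : Prop :=
  (exists x, Q x /\ g x = v) /\ forall x, Q x -> g x <= v.

Definition lagr {m n} (f : vec n -> R) (A : mat m n) (l : vec m) (x : vec n) : R :=
  - f x - dot (mtapply A l) x.

Definition phi {m n} (Q : vec n -> Prop) (f : vec n -> R) (A : mat m n) (b : vec m)
  (l : vec m) : R :=
  dot l b + epsilon (inhabits 0) (fun v => is_max_value Q (lagr f A l) v).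

Definition grad {m n} (A : mat m n) (b : vec m) (xsel : vec m -> vec n) (l : vec m) : vec m :=
  vsub b (mapply A (xsel l)).

Definition c_nu (nu : R) : R :=
  if Rlt_dec nu 1 then Rpower ((1 + nu) / (1 - nu)) ((1 - nu) / (1 + nu)) else 1.

Definition PDUGDsDR_run {m n} (Q : vec n -> Prop) (f : vec n -> R) (A : mat m n)
  (b : vec m) (eps : R) (xsel : vec m -> vec n)
  (beta : nat -> R) (lam eta zeta : nat -> vec m) (h a AA : nat -> R)
  (xhat : nat -> vec n) : Prop :=
  let ph := phi Q f A b in
  let g := fun k => grad A b xsel (lam k) in
  AA 0%nat = 0 /\ eta 0%nat = vzero /\ zeta 0%nat = vzero /\
  forall k : nat,
    (0 <= beta k <= 1 /\
     (forall bb, 0 <= bb <= 1 ->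
        ph (vadd (zeta k) (vscale (beta k) (vsub (eta k) (zeta k))))
        <= ph (vadd (zeta k) (vscale bb (vsub (eta k) (zeta k))))) /\
     lam k = vadd (zeta k) (vscale (beta k) (vsub (eta k) (zeta k)))) /\
    (g k <> vzero /\
     0 <= dot (g k) (vsub (zeta k) (lam k)) /\
     0 <= h (S k) /\
     (forall hh, 0 <= hh ->
        ph (vsub (lam k) (vscale (h (S k)) (g k)))
        <= ph (vsub (lam k) (vscale hh (g k)))) /\
     eta (S k) = vsub (lam k) (vscale (h (S k)) (g k))) /\
    (let eqn := fun aa : R =>
        ph (eta (S k)) = ph (lam k) - aa ^ 2 / (2 * (AA k + aa)) * (norm2 (g k)) ^ 2
                         + eps * aa / (2 * (AA k + aa)) in
     AA k + a (S k) <> 0 /\ eqn (a (S k)) /\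
     (forall aa, AA k + aa <> 0 -> eqn aa -> aa <= a (S k))) /\
    AA (S k) = AA k + a (S k) /\
    zeta (S k) = vsub (zeta k) (vscale (a (S k)) (g k)) /\
    xhat (S k) = (fun j => / AA (S k) * sum_f_R0 (fun i => a (S i) * xsel (lam i) j) k).

From HB Require Import structures.
From mathcomp Require Import all_boot.
From Stdlib Require Import Reals ClassicalEpsilon Lra Psatz FunctionalExtensionality.
Open Scope R_scope.

(* The argument is the estimate-sequence analysis of the universal gradient method run on the
   dual.  The quadratic [|l - zeta_k|^2 / 2] accumulates the affine minorants
   [a_(i+1) (phi (lam_i) + <g_i, l - lam_i>)] of [phi], and the choice of [a_(k+1)] in step 3 keeps
   [A_k (phi (eta_k) - eps / 2)] below the resulting estimate function.  As the slopes [g_i] are the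
   residuals [b - A x (lam_i)], Jensen's inequality for [f] turns this into
   [phi (eta_k) + f (xhat_k) <= eps / 2 + |l|^2 / (2 A_k) - <A xhat_k - b, l>] for every [l];
   testing with [l] of norm [2 R] along the residual and using weak duality at [lam*] gives both
   bounds.  Comparing step 3 with the decrease guaranteed by the Hoelder condition yields
   [a_(k+1)^p >= C A_(k+1)^(p - 1)] with [p = (1 + 3 nu) / (1 + nu)], so that [A_k^(1/p)] grows
   linearly in [k]. *)

HB.instance Definition _ :=
  Monoid.isComLaw.Build R 0 Rplus (fun x y z => esym (Rplus_assoc x y z)) Rplus_comm Rplus_0_l.
HB.instance Definition _ := Monoid.isMulLaw.Build R 0 Rmult Rmult_0_l Rmult_0_r.
HB.instance Definition _ :=
  Monoid.isAddLaw.Build R Rmult Rplus Rmult_plus_distr_r Rmult_plus_distr_l.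

Ltac vec_ext :=
  apply: functional_extensionality => ?; unfold vadd, vsub, vscale, vzero; ring.

Section Vectors.
Context {n : nat}.
Implicit Types (x y z : vec n) (c : R).

Lemma sumR_ge0 (F : 'I_n -> R) :
  (forall i, 0 <= F i) -> 0 <= \big[Rplus/0]_(i < n) F i.
Proof. by move=> F_ge0; apply: big_ind => //; [lra | move=> u v; lra]. Qed.

Lemma sumR_eq0 (F : 'I_n -> R) :
  (forall i, 0 <= F i) -> \big[Rplus/0]_(i < n) F i = 0 -> forall i, F i = 0.
Proof.
move=> F_ge0 + i; rewrite (bigD1 i) //=; set S := (X in F i + X = 0) => sum_eq0.
have S_ge0 : 0 <= S by apply: big_ind => //; [lra | move=> u v; lra].
by have := F_ge0 i; lra.
Qed.

Lemma dotC x y : dot x y = dot y x.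
Proof. by rewrite /dot; apply: eq_bigr => i _; ring. Qed.

Lemma dotDl x y z : dot (vadd x y) z = dot x z + dot y z.
Proof. by rewrite /dot -big_split; apply: eq_bigr => i _; rewrite /vadd /=; ring. Qed.

Lemma dotZl c x y : dot (vscale c x) y = c * dot x y.
Proof. by rewrite /dot big_distrr; apply: eq_bigr => i _; rewrite /vscale /=; ring. Qed.

Lemma dotBl x y z : dot (vsub x y) z = dot x z - dot y z.
Proof.
have -> : vsub x y = vadd x (vscale (-1) y) by vec_ext.
by rewrite dotDl dotZl; ring.
Qed.

Lemma dotDr x y z : dot x (vadd y z) = dot x y + dot x z.
Proof. by rewrite dotC dotDl !(dotC x). Qed.

Lemma dotBr x y z : dot x (vsub y z) = dot x y - dot x z.
Proof. by rewrite dotC dotBl !(dotC x). Qed.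

Lemma dotZr c x y : dot x (vscale c y) = c * dot x y.
Proof. by rewrite dotC dotZl dotC. Qed.

Lemma dot0r x : dot x vzero = 0.
Proof. by rewrite (_ : vzero = vscale 0 x); [rewrite dotZr; ring | vec_ext]. Qed.

Lemma dotxx_ge0 x : 0 <= dot x x.
Proof. by apply: sumR_ge0 => i; nra. Qed.

Lemma dotxx_eq0 x : dot x x = 0 -> x = vzero.
Proof.
move=> xx_eq0; have sq_ge0 i : 0 <= x i * x i by nra.
have x2_eq0 := sumR_eq0 _ sq_ge0 xx_eq0.
by apply: functional_extensionality => i; have := x2_eq0 i; rewrite /vzero; nra.
Qed.

Lemma norm2_ge0 x : 0 <= norm2 x.
Proof. exact: sqrt_pos. Qed.

Lemma norm2_sq x : norm2 x * norm2 x = dot x x.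
Proof. exact/sqrt_sqrt/dotxx_ge0. Qed.

Lemma norm2_gt0 x : x <> vzero -> 0 < norm2 x.
Proof.
move=> x_neq0; case: (Rle_lt_or_eq_dec _ _ (norm2_ge0 x)) => // nx_eq0.
by case: x_neq0; apply: dotxx_eq0; rewrite -norm2_sq -nx_eq0; ring.
Qed.

Lemma norm2Z c x : norm2 (vscale c x) = Rabs c * norm2 x.
Proof.
rewrite /norm2 dotZl dotZr -Rmult_assoc sqrt_mult; [|nra|exact: dotxx_ge0].
by rewrite -sqrt_Rsqr_abs.
Qed.

Lemma cauchy_schwarz x y : dot x y <= norm2 x * norm2 y.
Proof.
have sq_le : dot x y * dot x y <= dot x x * dot y y.
  case: (Rle_lt_or_eq_dec _ _ (dotxx_ge0 y)) => [yy_gt0|yy_eq0].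
    (* the squared norm of [<y,y> x - <x,y> y] is [<y,y> (<x,x><y,y> - <x,y>^2)] *)
    have := dotxx_ge0 (vsub (vscale (dot y y) x) (vscale (dot x y) y)).
    rewrite !(dotBl, dotBr, dotZl, dotZr) (dotC y x); nra.
  by move/esym/dotxx_eq0: (yy_eq0) => ->; rewrite !dot0r; nra.
have P_ge0 := Rmult_le_pos _ _ (norm2_ge0 x) (norm2_ge0 y).
rewrite -!norm2_sq in sq_le; nra.
Qed.

Lemma dot_vadd_scale_sq x y c :
  dot (vadd x (vscale c y)) (vadd x (vscale c y))
  = dot x x + 2 * c * dot x y + c ^ 2 * dot y y.
Proof. by rewrite !(dotDl, dotDr, dotZl, dotZr) (dotC y x); ring. Qed.

Lemma dot_sum_f_R0 (w : nat -> R) (X : nat -> vec n) z N :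
  dot (fun j => sum_f_R0 (fun i => w i * X i j) N) z = sum_f_R0 (fun i => w i * dot (X i) z) N.
Proof.
elim: N => [|N IHN] /=; first by rewrite -dotZl.
by rewrite -IHN -dotZl -dotDl.
Qed.

End Vectors.

Lemma dot_mtapply m n (A : mat m n) l x : dot (mtapply A l) x = dot l (mapply A x).
Proof.
rewrite /dot /mtapply /mapply.
under eq_bigr do rewrite big_distrl.
rewrite exchange_big; apply: eq_bigr => i _.
by rewrite big_distrr; apply: eq_bigr => j _ /=; ring.
Qed.

Lemma exp_le x y : x <= y -> exp x <= exp y.
Proof. by case/Rle_lt_or_eq_dec => [/exp_increasing/Rlt_le | ->] //; lra. Qed.

Lemma ln_le x y : 0 < x -> x <= y -> ln x <= ln y.
Proof. by move=> x_gt0; case/Rle_lt_or_eq_dec => [/(ln_increasing _ _ x_gt0)/Rlt_le | ->] //; lra. Qed.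

Lemma exp_convex x y t : 0 <= t <= 1 ->
  exp (t * x + (1 - t) * y) <= t * exp x + (1 - t) * exp y.
Proof.
move=> t01; set z := t * x + (1 - t) * y.
have tangent w : exp z * (1 + (w - z)) <= exp w.
  rewrite (_ : exp w = exp z * exp (w - z)); last by rewrite -exp_plus; congr exp; ring.
  by apply: Rmult_le_compat_l; [exact/Rlt_le/exp_pos | exact: exp_ineq1_le].
have := tangent x; have := tangent y; rewrite /z; nra.
Qed.

Lemma ln_concave t x y : 0 <= t <= 1 -> 0 < x -> 0 < y ->
  t * ln x + (1 - t) * ln y <= ln (t * x + (1 - t) * y).
Proof.
move=> t01 x_gt0 y_gt0; rewrite -[_ + _ in X in X <= _]ln_exp.
apply: ln_le; first exact: exp_pos.
by have := @exp_convex (ln x) (ln y) _ t01; rewrite !exp_ln.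
Qed.

Lemma rpower_bernoulli z p : 0 < z -> 1 <= p -> 1 + p * (z - 1) <= Rpower z p.
Proof.
move=> z_gt0 p_ge1.
have ip01 : 0 <= / p <= 1.
  split; first by apply/Rlt_le/Rinv_0_lt_compat; lra.
  by rewrite -Rinv_1; apply: Rinv_le_contravar; lra.
have := @exp_convex (p * ln z) 0 _ ip01.
rewrite exp_0 (_ : / p * (p * ln z) + (1 - / p) * 0 = ln z); last by field; lra.
rewrite exp_ln // /Rpower => zle.
have := Rmult_le_compat_l p _ _ (ltac:(lra) : 0 <= p) zle.
rewrite (_ : p * (/ p * _ + _) = exp (p * ln z) + p - 1); first lra.
by field; lra.
Qed.

Lemma rpower_tangent x y p : 0 < x -> 0 < y -> 1 <= p ->
  Rpower y p + p * Rpower y (p - 1) * (x - y) <= Rpower x p.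
Proof.
move=> x_gt0 y_gt0 p_ge1.
have xy_gt0 : 0 < x / y by apply: Rdiv_lt_0_compat.
have yp_gt0 : 0 < Rpower y p by apply: exp_pos.
have -> : Rpower x p = Rpower y p * Rpower (x / y) p.
  by rewrite Rpower_mult_distr //; congr Rpower; field; lra.
have -> : Rpower y (p - 1) = Rpower y p / y.
  by rewrite -{2}(Rplus_minus 1 p) Rplus_comm Rpower_plus Rpower_1 //; field; lra.
have := Rmult_le_compat_l _ _ _ (Rlt_le _ _ yp_gt0) (rpower_bernoulli _ _ xy_gt0 p_ge1).
by have -> : Rpower y p * (1 + p * (x / y - 1)) = Rpower y p + p * (Rpower y p / y) * (x - y)
  by field; lra.
Qed.

Lemma le_of_le_add_div_nat x y z : 0 <= z ->
  (forall N : nat, (1 <= N)%nat -> x <= y + z / INR N) -> x <= y.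
Proof.
move=> z_ge0 le_xyz; apply: Rnot_lt_le => y_lt_x.
have [N N_gt] := INR_unbounded (z / (x - y)).
have N_gt0 : 0 < INR N.
  by apply: Rle_lt_trans N_gt; apply: Rmult_le_pos => //; apply/Rlt_le/Rinv_0_lt_compat; lra.
have N_ge1 : (1 <= N)%nat by apply/leP/INR_lt; rewrite /=.
have := le_xyz N N_ge1.
have : z < INR N * (x - y).
  by have := Rmult_lt_compat_r (x - y) _ _ (ltac:(lra)) N_gt; rewrite /Rdiv Rmult_assoc Rinv_l; lra.
move=> z_lt; rewrite /Rdiv; apply: Rlt_not_le.
apply: (Rmult_lt_reg_r (INR N)) => //.
by rewrite Rmult_plus_distr_r Rmult_assoc Rinv_l; lra.
Qed.

Lemma rpower_increment_bounds y h p : 0 < y -> 0 < h -> 1 <= p ->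
  p * Rpower y (p - 1) * h <= Rpower (y + h) p - Rpower y p <= p * Rpower (y + h) (p - 1) * h.
Proof.
move=> y_gt0 h_gt0 p_ge1; have yh_gt0 : 0 < y + h by lra.
have lower := rpower_tangent (y + h) y p yh_gt0 y_gt0 p_ge1.
have upper := rpower_tangent y (y + h) p y_gt0 yh_gt0 p_ge1.
by split; lra.
Qed.

Lemma ln_div x y : 0 < x -> 0 < y -> ln (x / y) = ln x - ln y.
Proof. by move=> x_gt0 y_gt0; rewrite ln_mult ?ln_Rinv //; apply: Rinv_0_lt_compat. Qed.

Lemma rpower_exp_ln_div x p : 0 < x -> p <> 0 -> Rpower (exp (ln x / p)) p = x.
Proof.
by move=> x_gt0 p_neq0; rewrite /Rpower ln_exp (_ : p * (ln x / p) = ln x) ?exp_ln //; field.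
Qed.

Lemma powR_gt0 x y : 0 < x -> powR x y = Rpower x y.
Proof. by rewrite /powR; case: Req_EM_T => [x_eq0 | //]; lra. Qed.

Section HolderSubgradientBound.
Context {F D : R -> R} {c K nu : R}.
Hypotheses (nu_ge0 : 0 <= nu) (K_ge0 : 0 <= K).
Hypothesis D_subgrad : forall t t', F t + (t' - t) * D t <= F t'.
Hypothesis D_le : forall t, 0 < t -> D t <= c + K * Rpower t nu.

Let increment_bounds y h : 0 < y -> 0 < h ->
  h * (K * Rpower y nu)
  <= K * Rpower (y + h) (1 + nu) / (1 + nu) - K * Rpower y (1 + nu) / (1 + nu)
  <= h * (K * Rpower (y + h) nu).
Proof.
move=> y_gt0 h_gt0; have p_ge1 : 1 <= 1 + nu by lra.
have := rpower_increment_bounds y h (1 + nu) y_gt0 h_gt0 p_ge1.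
replace (1 + nu - 1) with nu by ring; case=> lower upper.
have Kp_ge0 : 0 <= K / (1 + nu) by apply: Rmult_le_pos => //; apply/Rlt_le/Rinv_0_lt_compat; lra.
have := Rmult_le_compat_l _ _ _ Kp_ge0 lower; have := Rmult_le_compat_l _ _ _ Kp_ge0 upper.
have -> : K / (1 + nu) * ((1 + nu) * Rpower y nu * h) = h * (K * Rpower y nu) by field; lra.
have -> : K / (1 + nu) * ((1 + nu) * Rpower (y + h) nu * h) = h * (K * Rpower (y + h) nu) by field; lra.
have -> : K / (1 + nu) * (Rpower (y + h) (1 + nu) - Rpower y (1 + nu))
  = K * Rpower (y + h) (1 + nu) / (1 + nu) - K * Rpower y (1 + nu) / (1 + nu) by field; lra.
by split.
Qed.

(* Summing the subgradient inequality over the grid [h N] bounds [F] by upper Riemann sums of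
   [t ^ nu]. *)
Lemma holder_partition_bound h : 0 < h -> forall j : nat,
  F (INR j * h) <= F 0 + c * (INR j * h) + K * Rpower ((INR j + 1) * h) (1 + nu) / (1 + nu).
Proof.
move=> h_gt0; elim=> [|j IHj].
  have : 0 <= K * Rpower ((0 + 1) * h) (1 + nu) / (1 + nu).
    apply: Rmult_le_pos; last by apply/Rlt_le/Rinv_0_lt_compat; lra.
    by apply: Rmult_le_pos => //; exact/Rlt_le/exp_pos.
  by rewrite /= !Rmult_0_l Rmult_0_r; lra.
rewrite S_INR; set t := (INR j + 1) * h.
have t_gt0 : 0 < t by have := pos_INR j; rewrite /t; nra.
have step : F t <= F (INR j * h) + h * (c + K * Rpower t nu).
  have := D_subgrad t (INR j * h); have := D_le t t_gt0.
  rewrite (_ : INR j * h - t = - h); last by rewrite /t; ring.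
  by nra.
have [lower _] := increment_bounds t h t_gt0 h_gt0.
replace (t + h) with ((INR j + 1 + 1) * h) in lower by (rewrite /t; ring).
rewrite /t in IHj step lower *; lra.
Qed.

Lemma holder_subgradient_bound u : 0 < u ->
  F u <= F 0 + c * u + K * Rpower u (1 + nu) / (1 + nu).
Proof.
move=> u_gt0.
apply: (le_of_le_add_div_nat _ _ (K * Rpower (2 * u) nu * u)).
  by apply: Rmult_le_pos; [apply: Rmult_le_pos => //; exact/Rlt_le/exp_pos | lra].
move=> N N_ge1.
have N_gt0 : 0 < INR N by apply: lt_0_INR; apply/ltP.
have N_ge1' : 1 <= INR N by rewrite -/(INR 1); apply/le_INR/leP.
set h := u / INR N.
have h_gt0 : 0 < h by apply: Rdiv_lt_0_compat.
have h_le : h <= u.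
  rewrite /h -{2}(Rdiv_1_r u); apply: Rmult_le_compat_l; first lra.
  by rewrite -Rinv_1; apply: Rinv_le_contravar; lra.
have := holder_partition_bound h h_gt0 N.
replace (INR N * h) with u by (rewrite /h; field; lra).
replace ((INR N + 1) * h) with (u + h) by (rewrite /h; field; lra).
(* the last cell overshoots [u] by [h]; its contribution is [O(h)] *)
have [_ upper] := increment_bounds u h u_gt0 h_gt0.
have pow_le : Rpower (u + h) nu <= Rpower (2 * u) nu by apply: Rle_Rpower_l => //; lra.
have : h * (K * Rpower (u + h) nu) <= K * Rpower (2 * u) nu * u / INR N.
  replace (K * Rpower (2 * u) nu * u / INR N) with (h * (K * Rpower (2 * u) nu))
    by (rewrite /h; field; lra).
  by apply: Rmult_le_compat_l; [lra | apply: Rmult_le_compat_l].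
lra.
Qed.

End HolderSubgradientBound.

Section DualFunction.
Context {m n : nat} {Q : vec n -> Prop} {f : vec n -> R} {A : mat m n} {b : vec m}.
Context {xsel : vec m -> vec n}.
Hypothesis xsel_max : forall l, is_maximizer Q (lagr f A l) (xsel l).

Local Notation phi := (phi Q f A b).
Local Notation grad := (grad A b xsel).

Lemma phiE l : phi l = dot l b + lagr f A l (xsel l).
Proof.
have [xsel_Q xsel_ge] := xsel_max l.
have max_val : is_max_value Q (lagr f A l) (lagr f A l (xsel l)).
  by split; [exists (xsel l) | ].
rewrite /phi; congr (_ + _).
have [[y [Qy <-]] y_ge] := epsilon_spec (inhabits 0) _ (ex_intro _ _ max_val).
by apply: Rle_antisym; [apply: xsel_ge | apply: y_ge].
Qed.

Lemma phi_ge_lagr l x : Q x -> dot l b + lagr f A l x <= phi l.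
Proof. by move=> Qx; rewrite phiE; have := proj2 (xsel_max l) x Qx; lra. Qed.

Lemma phi_grad l : phi l = - f (xsel l) + dot l (grad l).
Proof. by rewrite phiE /lagr dot_mtapply /grad dotBr; ring. Qed.

Lemma phi_subgrad l l' : phi l + dot (vsub l' l) (grad l) <= phi l'.
Proof.
have := @phi_ge_lagr l' _ (proj1 (xsel_max l)).
rewrite (phi_grad l) /lagr dot_mtapply /grad !(dotBl, dotBr); lra.
Qed.

Section Descent.
Context {nu M : R}.
Hypotheses (nu_ge0 : 0 <= nu) (M_ge0 : 0 <= M).
Hypothesis grad_holder : forall l l',
  norm2 (vsub (grad l) (grad l')) <= M * powR (norm2 (vsub l l')) nu.

Lemma grad_ray_slope_le l t : 0 < t -> 0 < norm2 (grad l) ->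
  - dot (grad l) (grad (vsub l (vscale t (grad l))))
  <= - norm2 (grad l) ^ 2 + M * norm2 (grad l) * Rpower (norm2 (grad l)) nu * Rpower t nu.
Proof.
set g := grad l; set s := norm2 g; set g' := grad _ => t_gt0 s_gt0.
have dist : norm2 (vsub (vsub l (vscale t g)) l) = t * s.
  rewrite (_ : vsub _ l = vscale (- t) g); last by vec_ext.
  by rewrite norm2Z Rabs_Ropp Rabs_pos_eq //; lra.
have holder : norm2 (vsub g' g) <= M * (Rpower t nu * Rpower s nu).
  have := grad_holder (vsub l (vscale t g)) l.
  rewrite dist powR_gt0; last exact: Rmult_lt_0_compat.
  by rewrite -Rpower_mult_distr.
have := cauchy_schwarz (vscale (-1) g) (vsub g' g).
rewrite dotZl dotBr norm2Z Rabs_Ropp Rabs_R1 Rmult_1_l -norm2_sq -/s.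
have := Rmult_le_compat_l s _ _ (Rlt_le _ _ s_gt0) holder.
by nra.
Qed.

Lemma phi_descent l u : 0 < u -> 0 < norm2 (grad l) ->
  phi (vsub l (vscale u (grad l)))
  <= phi l - u * norm2 (grad l) ^ 2 + M * Rpower (u * norm2 (grad l)) (1 + nu) / (1 + nu).
Proof.
set g := grad l; set s := norm2 g => u_gt0 s_gt0.
pose P t := vsub l (vscale t g).
have K_ge0 : 0 <= M * s * Rpower s nu.
  by apply: Rmult_le_pos; [apply: Rmult_le_pos => //; lra | exact/Rlt_le/exp_pos].
have subgrad t t' : phi (P t) + (t' - t) * - dot g (grad (P t)) <= phi (P t').
  have := phi_subgrad (P t) (P t').
  by rewrite (_ : vsub (P t') (P t) = vscale (- (t' - t)) g) ?dotZl; [lra | rewrite /P; vec_ext].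
have slope_le t : 0 < t -> - dot g (grad (P t)) <= - s ^ 2 + M * s * Rpower s nu * Rpower t nu.
  by move=> t_gt0; exact: grad_ray_slope_le.
have := holder_subgradient_bound nu_ge0 K_ge0 subgrad slope_le u u_gt0.
have pow_us : M * Rpower (u * s) (1 + nu) = M * s * Rpower s nu * Rpower u (1 + nu).
  by rewrite -Rpower_mult_distr // (Rpower_plus 1 nu s) Rpower_1 //; ring.
have -> : P 0 = l by rewrite /P; vec_ext.
by rewrite pow_us /P; lra.
Qed.

End Descent.

End DualFunction.

(* Weighted AM-GM with weights [(1 + nu) / 2] and [(1 - nu) / 2] eliminates [s]. *)
Lemma step_size_lower_bound_lt1 nu M u s d : 0 <= nu < 1 -> 0 < M -> 0 < u -> 0 < s -> 0 < d ->
  u * s ^ 2 / 2 + d / 2 <= M * Rpower (u * s) (1 + nu) / (1 + nu) ->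
  ln (Rpower ((1 + nu) / (1 - nu)) ((1 - nu) / (1 + nu))) + (1 - nu) / (1 + nu) * ln d
  - 2 / (1 + nu) * ln M <= ln u.
Proof.
move=> nu01 M_gt0 u_gt0 s_gt0 d_gt0 decrease.
have us2_gt0 : 0 < u * s ^ 2 by apply: Rmult_lt_0_compat => //; apply: pow_lt.
set th := (1 + nu) / 2.
have th01 : 0 <= th <= 1 by rewrite /th; lra.
have X_gt0 : 0 < u * s ^ 2 / (1 + nu) by apply: Rdiv_lt_0_compat; lra.
have Y_gt0 : 0 < d / (1 - nu) by apply: Rdiv_lt_0_compat; lra.
have amgm := ln_concave th _ _ th01 X_gt0 Y_gt0.
replace (th * (u * s ^ 2 / (1 + nu)) + (1 - th) * (d / (1 - nu)))
  with (u * s ^ 2 / 2 + d / 2) in amgm by (rewrite /th; field; lra).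
have rhs_gt0 : 0 < u * s ^ 2 / 2 + d / 2 by lra.
have := ln_le _ _ rhs_gt0 decrease.
have -> : ln (M * Rpower (u * s) (1 + nu) / (1 + nu))
          = ln M + (1 + nu) * (ln u + ln s) - ln (1 + nu).
  have pow_gt0 : 0 < Rpower (u * s) (1 + nu) by apply: exp_pos.
  rewrite ln_div; [| exact: Rmult_lt_0_compat | lra].
  by rewrite ln_mult // ln_Rpower ln_mult.
have eX : ln (u * s ^ 2 / (1 + nu)) = ln u + 2 * ln s - ln (1 + nu).
  rewrite ln_div //; last lra.
  by rewrite ln_mult ?ln_pow //=; nra.
have eY : ln (d / (1 - nu)) = ln d - ln (1 - nu) by rewrite ln_div //; lra.
rewrite eX eY /th in amgm => ln_ineq.
rewrite ln_Rpower ln_div; try lra.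
apply: (Rmult_le_reg_l (1 + nu)); first lra.
have -> : (1 + nu) * ((1 - nu) / (1 + nu) * (ln (1 + nu) - ln (1 - nu))
           + (1 - nu) / (1 + nu) * ln d - 2 / (1 + nu) * ln M)
          = (1 - nu) * (ln (1 + nu) - ln (1 - nu) + ln d) - 2 * ln M by field; lra.
nra.
Qed.

Lemma step_size_lower_bound nu M u s d : 0 <= nu <= 1 -> 0 < M -> 0 < u -> 0 < s -> 0 < d ->
  u * s ^ 2 / 2 + d / 2 <= M * Rpower (u * s) (1 + nu) / (1 + nu) ->
  ln (c_nu nu) + (1 - nu) / (1 + nu) * ln d - 2 / (1 + nu) * ln M <= ln u.
Proof.
move=> nu01 M_gt0 u_gt0 s_gt0 d_gt0 decrease.
rewrite /c_nu; case: Rlt_dec => [nu_lt1 | nu_ge1] /=.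
  by apply: step_size_lower_bound_lt1 decrease; lra.
have nu_eq1 : nu = 1 by lra.
subst nu; rewrite ln_1.
have pow2 : Rpower (u * s) (1 + 1) = (u * s) ^ 2.
  by rewrite (_ : 1 + 1 = INR 2) ?Rpower_pow //=; nra.
rewrite pow2 in decrease.
have Mu_gt1 : 1 < M * u.
  have us2_gt0 : 0 < u * s ^ 2 by apply: Rmult_lt_0_compat => //; apply: pow_lt.
  by apply: (Rmult_lt_reg_r (u * s ^ 2)) => //; nra.
have := ln_increasing _ _ Rlt_0_1 Mu_gt1.
rewrite ln_1 ln_mult //.
have -> : (1 - 1) / (1 + 1) = 0 by field.
have -> : 2 / (1 + 1) = 1 by field.
lra.
Qed.

(* The [p]-th roots [r_k] of the [S_k] satisfy [r_(k+1) - r_k >= exp (K / p) / p], by the tangent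
   inequality for [t ^ p] between [r_k] and [r_(k+1)]. *)
Lemma ln_partial_sum_growth p K (S a : nat -> R) : 1 <= p -> S 0%nat = 0 ->
  (forall k, S k.+1 = S k + a k.+1) -> (forall k, 0 < a k.+1) ->
  (forall k, K + (p - 1) * ln (S k.+1) <= p * ln (a k.+1)) ->
  forall k, (1 <= k)%nat -> K + p * ln (INR k / p) <= ln (S k).
Proof.
move=> p_ge1 S0 S_step a_gt0 a_large.
have S_gt0 k : 0 < S k.+1.
  elim: k => [|k IHk]; first by rewrite S_step S0; have := a_gt0 0%nat; lra.
  by rewrite S_step; have := a_gt0 k.+1; lra.
pose r k := exp (ln (S k) / p).
pose kappa := exp (K / p).
have r_gt0 k : 0 < r k by apply: exp_pos.
have kappa_le k : kappa * Rpower (r k.+1) (p - 1) <= a k.+1.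
  rewrite /kappa /Rpower /r ln_exp -exp_plus -[a k.+1]exp_ln //; apply: exp_le.
  apply: (Rmult_le_reg_l p); first lra.
  have -> : p * (K / p + (p - 1) * (ln (S k.+1) / p)) = K + (p - 1) * ln (S k.+1).
    by field; lra.
  exact: a_large.
have r_lin k : kappa * (INR k.+1 / p) <= r k.+1.
  elim: k => [|k IHk].
    have := a_large 0%nat; rewrite S_step S0 Rplus_0_l => K_le.
    change (INR 1) with 1; rewrite /kappa /r S_step S0 Rplus_0_l.
    have inv_le1 : 1 / p <= 1.
      by rewrite /Rdiv Rmult_1_l -Rinv_1; apply: Rinv_le_contravar; lra.
    have : exp (K / p) <= exp (ln (a 1%nat) / p).
      by apply/exp_le/Rmult_le_compat_r; [apply/Rlt_le/Rinv_0_lt_compat | ]; lra.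
    by have := exp_pos (K / p); nra.
  have tangent := rpower_tangent (r k.+1) (r k.+2) p (r_gt0 _) (r_gt0 _) p_ge1.
  rewrite !rpower_exp_ln_div in tangent; try lra; try exact: S_gt0.
  have Ry_gt0 : 0 < Rpower (r k.+2) (p - 1) by apply: exp_pos.
  have := kappa_le k.+1; rewrite S_step in tangent => a_ge.
  have kappa_le_diff : kappa <= p * (r k.+2 - r k.+1).
    by apply: (Rmult_le_reg_r (Rpower (r k.+2) (p - 1))) => //; nra.
  have -> : kappa * (INR k.+2 / p) = kappa * (INR k.+1 / p) + kappa / p.
    by rewrite [INR k.+2]S_INR; field; lra.
  have : kappa / p <= r k.+2 - r k.+1.
    by apply: (Rmult_le_reg_l p); [lra | rewrite (_ : p * (kappa / p) = kappa); [lra | field; lra]].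
  lra.
case=> [|k] // _.
have ratio_gt0 : 0 < INR k.+1 / p by apply: Rdiv_lt_0_compat; [apply: lt_0_INR; lia | lra].
have := ln_le _ _ (Rmult_lt_0_compat _ _ (exp_pos _) ratio_gt0) (r_lin k).
rewrite ln_mult ?ln_exp //; last exact: exp_pos.
move=> ln_ineq; apply: (Rmult_le_reg_r (/ p)); first by apply: Rinv_0_lt_compat; lra.
rewrite Rmult_plus_distr_r (_ : p * ln (INR k.+1 / p) * / p = ln (INR k.+1 / p)); last by field; lra.
exact: ln_ineq.
Qed.

(* The step-3 equation [y = x - a^2 G / (2 (S + a)) + eps a / (2 (S + a))] is the quadratic
   [G a^2 + (2 (y - x) - eps) a + 2 S (y - x) = 0], whose larger root is positive when [y <= x]. *)
Lemma step3_equation_pos_root x y G S eps : 0 < G -> y <= x -> 0 <= S -> 0 < eps ->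
  exists a0, 0 < a0 /\
    y = x - a0 ^ 2 / (2 * (S + a0)) * G + eps * a0 / (2 * (S + a0)).
Proof.
move=> G_gt0 yx S_ge0 eps_gt0.
set d := y - x; set E := eps - 2 * d.
set D := E * E - 8 * G * S * d.
have D_ge0 : 0 <= D by rewrite /D /E /d; have := Rmult_le_pos _ _ (Rlt_le _ _ G_gt0) S_ge0; nra.
have sqrtD := sqrt_sqrt _ D_ge0; have sqrtD_ge0 := sqrt_pos D.
exists ((E + sqrt D) / (2 * G)); split.
  by apply: Rdiv_lt_0_compat; rewrite /E /d; lra.
set a0 := (E + sqrt D) / (2 * G).
have a0_gt0 : 0 < a0 by apply: Rdiv_lt_0_compat; rewrite /E /d; lra.
have root : G * a0 ^ 2 + (2 * d - eps) * a0 + 2 * S * d = 0.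
  have a0E : 2 * G * a0 = E + sqrt D by rewrite /a0; field; lra.
  apply: (Rmult_eq_reg_l (4 * G)); last lra.
  rewrite /D /E in sqrtD a0E; nra.
apply: (Rmult_eq_reg_l (2 * (S + a0))); last lra.
by field_simplify; [rewrite /d in root; lra | lra].
Qed.

Lemma convex_combination n (Q : vec n -> Prop) (f : vec n -> R) (w : nat -> R) (X : nat -> vec n) :
  convex_set Q -> convex_on Q f -> (forall i, 0 < w i) -> (forall i, Q (X i)) ->
  forall N, Q (fun j => / sum_f_R0 w N * sum_f_R0 (fun i => w i * X i j) N) /\
    f (fun j => / sum_f_R0 w N * sum_f_R0 (fun i => w i * X i j) N)
    <= / sum_f_R0 w N * sum_f_R0 (fun i => w i * f (X i)) N.
Proof.
move=> Q_convex f_convex w_gt0 X_Q; elim=> [|N [IHQ IHf]] /=.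
  have -> : (fun j => / w 0%nat * (w 0%nat * X 0%nat j)) = X 0%nat.
    by apply: functional_extensionality => j; field; have := w_gt0 0%nat; lra.
  by split => //; rewrite -Rmult_assoc Rinv_l ?Rmult_1_l; [lra | have := w_gt0 0%nat; lra].
set W := sum_f_R0 w N in IHQ IHf *.
have W_gt0 : 0 < W by apply: tech1 => i _.
have wN_gt0 := w_gt0 N.+1.
set t := W / (W + w N.+1).
have t01 : 0 <= t <= 1.
  split; first by apply/Rlt_le/Rdiv_lt_0_compat; lra.
  by apply: (Rmult_le_reg_r (W + w N.+1)); [lra | rewrite /t; field_simplify; lra].
set P := (fun j => / W * sum_f_R0 (fun i => w i * X i j) N) in IHQ IHf *.
have -> : (fun j => / (W + w N.+1) * (sum_f_R0 (fun i => w i * X i j) N + w N.+1 * X N.+1 j))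
          = vadd (vscale t P) (vscale (1 - t) (X N.+1)).
  by apply: functional_extensionality => j; rewrite /vadd /vscale /P /t; field; lra.
split; first exact: Q_convex.
apply: Rle_trans (f_convex _ _ _ IHQ (X_Q _) t01) _.
have -> : / (W + w N.+1) * (sum_f_R0 (fun i => w i * f (X i)) N + w N.+1 * f (X N.+1))
          = t * (/ W * sum_f_R0 (fun i => w i * f (X i)) N) + (1 - t) * f (X N.+1).
  by rewrite /t; field; lra.
by have := Rmult_le_compat_l _ _ _ (proj1 t01) IHf; lra.
Qed.

(* Testing with the multiplier of norm [2 Rad] along [r] bounds [G + 2 Rad |r|]; the last hypothesis
   (weak duality at [ls]) bounds [G] from below. *)
Lemma residual_gap_bounds {m} {r ls : vec m} {G e W Rad : R} :
  0 < W -> 0 < Rad -> norm2 ls <= Rad -> 0 <= e ->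
  (forall l, G <= e + dot l l / (2 * W) - dot r l) -> - dot ls r <= G ->
  norm2 r <= 2 * Rad / W + e / Rad /\ Rabs G <= 2 * Rad ^ 2 / W + e.
Proof.
move=> W_gt0 Rad_gt0 ls_le e_ge0 G_le G_ge.
set rho := norm2 r.
have rho_ge0 : 0 <= rho := norm2_ge0 r.
have Rad2W_ge0 : 0 <= 2 * Rad ^ 2 / W by apply: Rmult_le_pos; [nra | apply/Rlt_le/Rinv_0_lt_compat].
have G_lower : - (Rad * rho) <= G.
  have := cauchy_schwarz ls r; rewrite -/rho => cs.
  by have := Rmult_le_compat_r _ _ _ rho_ge0 ls_le; lra.
have G_upper : G + 2 * Rad * rho <= e + 2 * Rad ^ 2 / W.
  case: (Rle_lt_or_eq_dec _ _ rho_ge0) => [rho_gt0 | rho_eq0].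
    have := G_le (vscale (2 * Rad / rho) r).
    rewrite dotZl !dotZr -norm2_sq -/rho.
    have -> : 2 * Rad / rho * (2 * Rad / rho * (rho * rho)) / (2 * W) = 2 * Rad ^ 2 / W.
      by field; lra.
    have -> : 2 * Rad / rho * (rho * rho) = 2 * Rad * rho by field; lra.
    lra.
  have := G_le vzero; rewrite !dot0r -rho_eq0.
  by rewrite /Rdiv Rmult_0_l; lra.
split; last by apply: Rabs_le; have := Rmult_le_pos _ _ (Rlt_le _ _ Rad_gt0) rho_ge0; lra.
apply: (Rmult_le_reg_l Rad) => //.
by rewrite (_ : Rad * (2 * Rad / W + e / Rad) = 2 * Rad ^ 2 / W + e); [lra | field; lra].
Qed.

Section PDUGDsDR.
Context {m n : nat} {Q : vec n -> Prop} {f : vec n -> R} {A : mat m n} {b : vec m}.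
Context {eps : R} {xsel : vec m -> vec n}.
Context {beta : nat -> R} {lam eta zeta : nat -> vec m} {h a AA : nat -> R} {xhat : nat -> vec n}.
Hypothesis xsel_max : forall l, is_maximizer Q (lagr f A l) (xsel l).
Hypothesis eps_gt0 : 0 < eps.
Hypothesis run : PDUGDsDR_run Q f A b eps xsel beta lam eta zeta h a AA xhat.

Local Notation phi := (phi Q f A b).
Local Notation g k := (grad A b xsel (lam k)).

Lemma AA0 : AA 0%nat = 0. Proof. by case: run. Qed.

Lemma zeta0 : zeta 0%nat = vzero. Proof. by case: run => _ [_ []]. Qed.

Let step k := proj2 (proj2 (proj2 run)) k.

Lemma phi_lam_le_eta k : phi (lam k) <= phi (eta k).
Proof.
have [[_ [beta_min ->]] _] := step k.
have := beta_min 1 (conj (Rle_0_1) (Rle_refl 1)).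
by rewrite (_ : vadd (zeta k) (vscale 1 (vsub (eta k) (zeta k))) = eta k); last by vec_ext.
Qed.

Lemma phi_eta_le_ray k t : 0 <= t -> phi (eta k.+1) <= phi (vsub (lam k) (vscale t (g k))).
Proof. by have [_ [[_ [_ [_ [h_min ->]]]] _]] := step k; exact: h_min. Qed.

Lemma grad_neq0 k : g k <> vzero.
Proof. by have [_ [[] ]] := step k. Qed.

Lemma grad_zeta_lam_ge0 k : 0 <= dot (g k) (vsub (zeta k) (lam k)).
Proof. by have [_ [[_ []]]] := step k. Qed.

Lemma AA_step k : AA k.+1 = AA k + a k.+1.
Proof. by have [_ [_ [_ []]]] := step k. Qed.

Lemma zeta_step k : zeta k.+1 = vsub (zeta k) (vscale (a k.+1) (g k)).
Proof. by have [_ [_ [_ [_ []]]]] := step k. Qed.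

Lemma xhat_step k :
  xhat k.+1 = (fun j => / AA k.+1 * sum_f_R0 (fun i => a i.+1 * xsel (lam i) j) k).
Proof. by have [_ [_ [_ [_ [_ ->]]]]] := step k. Qed.

Lemma step3_eq k :
  AA k + a k.+1 <> 0 /\
  phi (eta k.+1) = phi (lam k) - a k.+1 ^ 2 / (2 * (AA k + a k.+1)) * norm2 (g k) ^ 2
                   + eps * a k.+1 / (2 * (AA k + a k.+1)).
Proof. by have [_ [_ [[? [? _]] _]]] := step k. Qed.

Lemma a_gt0_of_AA_ge0 k : 0 <= AA k -> 0 < a k.+1.
Proof.
move=> AA_ge0.
have [_ [_ [[_ [_ a_max]] _]]] := step k.
have G_gt0 : 0 < norm2 (g k) ^ 2 by apply: pow_lt; apply: norm2_gt0; exact: grad_neq0.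
have eta_le : phi (eta k.+1) <= phi (lam k).
  have := phi_eta_le_ray k 0 (Rle_refl 0).
  by rewrite (_ : vsub (lam k) (vscale 0 (g k)) = lam k); last by vec_ext.
have [a0 [a0_gt0 a0_eq]] := step3_equation_pos_root _ _ _ _ _ G_gt0 eta_le AA_ge0 eps_gt0.
by have := a_max a0 ltac:(lra) a0_eq; lra.
Qed.

Lemma AA_ge0 k : 0 <= AA k.
Proof.
elim: k => [|k IHk]; first by rewrite AA0; lra.
by rewrite AA_step; have := a_gt0_of_AA_ge0 k IHk; lra.
Qed.

Lemma a_gt0 k : 0 < a k.+1.
Proof. exact/a_gt0_of_AA_ge0/AA_ge0. Qed.

Lemma AA_gt0 k : 0 < AA k.+1.
Proof. by rewrite AA_step; have := AA_ge0 k; have := a_gt0 k; lra. Qed.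

Lemma AA_sum k : AA k.+1 = sum_f_R0 (fun i => a i.+1) k.
Proof.
elim: k => [|k IHk]; first by rewrite AA_step AA0 /=; ring.
by rewrite AA_step IHk.
Qed.

Lemma estimate_step k l S :
  AA k * phi (eta k) - AA k * eps / 2 + dot (vsub l (zeta k)) (vsub l (zeta k)) / 2
    <= dot l l / 2 + S ->
  AA k.+1 * phi (eta k.+1) - AA k.+1 * eps / 2 + dot (vsub l (zeta k.+1)) (vsub l (zeta k.+1)) / 2
    <= dot l l / 2 + (S + a k.+1 * (- f (xsel (lam k)) + dot (g k) l)).
Proof.
move=> estimate_k.
have [AA'_neq0 phi_eta'] := step3_eq k.
have phi_lam := phi_grad (b := b) xsel_max (lam k).
have model_le : AA k * phi (lam k) <= AA k * phi (eta k).
  exact/Rmult_le_compat_l/phi_lam_le_eta/AA_ge0.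
have zeta_dir : 0 <= a k.+1 * (dot (g k) (zeta k) - dot (g k) (lam k)).
  by apply: Rmult_le_pos; [exact/Rlt_le/a_gt0 | rewrite -dotBr; exact: grad_zeta_lam_ge0].
have phi_eta'_AA : AA k.+1 * phi (eta k.+1)
    = AA k.+1 * phi (lam k) - a k.+1 ^ 2 * dot (g k) (g k) / 2 + eps * a k.+1 / 2.
  by rewrite phi_eta' AA_step -norm2_sq; field.
have expand : dot (vsub l (zeta k.+1)) (vsub l (zeta k.+1))
    = dot (vsub l (zeta k)) (vsub l (zeta k))
      + 2 * a k.+1 * (dot (g k) l - dot (g k) (zeta k)) + a k.+1 ^ 2 * dot (g k) (g k).
  have -> : vsub l (zeta k.+1) = vadd (vsub l (zeta k)) (vscale (a k.+1) (g k)).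
    by rewrite zeta_step; vec_ext.
  by rewrite dot_vadd_scale_sq (dotC (vsub l (zeta k))) (dotBr (g k)).
rewrite expand phi_eta'_AA AA_step phi_lam (dotC (lam k)) in estimate_k model_le *; lra.
Qed.

Lemma estimate_seq k l :
  AA k.+1 * phi (eta k.+1) - AA k.+1 * eps / 2 + dot (vsub l (zeta k.+1)) (vsub l (zeta k.+1)) / 2
  <= dot l l / 2 + sum_f_R0 (fun i => a i.+1 * (- f (xsel (lam i)) + dot (g i) l)) k.
Proof.
elim: k => [|k IHk] /=; last exact: estimate_step.
rewrite -[X in _ <= _ + X]Rplus_0_l; apply: estimate_step.
by rewrite AA0 zeta0 (_ : vsub l vzero = l); [lra | vec_ext].
Qed.

Section Averages.
Hypotheses (Q_convex : convex_set Q) (f_convex : convex_on Q f).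

Lemma xhat_jensen k :
  Q (xhat k.+1) /\ f (xhat k.+1) <= / AA k.+1 * sum_f_R0 (fun i => a i.+1 * f (xsel (lam i))) k.
Proof.
rewrite xhat_step AA_sum.
exact: convex_combination Q_convex f_convex a_gt0 (fun i => proj1 (xsel_max (lam i))) k.
Qed.

Lemma gap_le k l :
  phi (eta k.+1) + f (xhat k.+1)
  <= eps / 2 + dot l l / (2 * AA k.+1) - dot (vsub (mapply A (xhat k.+1)) b) l.
Proof.
have W_gt0 := AA_gt0 k; set W := AA k.+1 in W_gt0 *.
have [_ f_xhat] := xhat_jensen k.
have models : sum_f_R0 (fun i => a i.+1 * (- f (xsel (lam i)) + dot (g i) l)) k
    = - sum_f_R0 (fun i => a i.+1 * f (xsel (lam i))) k
      + W * (dot b l - dot (mapply A (xhat k.+1)) l).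
  rewrite (dotC (mapply A _) l) -dot_mtapply xhat_step -/W.
  change (fun j => / W * _) with
    (vscale (/ W) (fun j => sum_f_R0 (fun i => a i.+1 * xsel (lam i) j) k)).
  rewrite dotZr (dotC (mtapply A l)) (dot_sum_f_R0 _ (fun i => xsel (lam i))).
  rewrite (sum_eq _ (fun i => (a i.+1 * dot b l - a i.+1 * dot (xsel (lam i)) (mtapply A l))
                              - a i.+1 * f (xsel (lam i)))); last first.
    by move=> i _; rewrite dotBl (dotC (mapply A _)) -dot_mtapply (dotC _ (xsel _)); ring.
  rewrite !minus_sum -(scal_sum _ _ (dot b l)) -AA_sum -/W.
  by field; lra.
have := estimate_seq k l; rewrite models -/W => estimate.
have := dotxx_ge0 (vsub l (zeta k.+1)).
have := Rmult_le_compat_l _ _ _ (Rlt_le _ _ W_gt0) f_xhat.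
rewrite -Rmult_assoc Rinv_r ?Rmult_1_l; last lra.
move=> Wf_le dist_ge0.
apply: (Rmult_le_reg_l W) => //.
rewrite dotBl.
have -> : W * (eps / 2 + dot l l / (2 * W) - (dot (mapply A (xhat k.+1)) l - dot b l))
          = W * eps / 2 + dot l l / 2 + W * (dot b l - dot (mapply A (xhat k.+1)) l).
  by field; lra.
lra.
Qed.

Lemma residual_gap_le ls Rad k : 0 < Rad -> norm2 ls <= Rad -> (forall l, phi ls <= phi l) ->
  norm2 (vsub (mapply A (xhat k.+1)) b) <= 2 * Rad / AA k.+1 + eps / (2 * Rad) /\
  Rabs (phi (eta k.+1) + f (xhat k.+1)) <= 2 * Rad ^ 2 / AA k.+1 + eps / 2.
Proof.
move=> Rad_gt0 ls_le ls_opt.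
have [xhat_Q _] := xhat_jensen k.
have weak_duality : - dot ls (vsub (mapply A (xhat k.+1)) b) <= phi (eta k.+1) + f (xhat k.+1).
  have := phi_ge_lagr (b := b) xsel_max ls _ xhat_Q; have := ls_opt (eta k.+1).
  by rewrite /lagr dot_mtapply dotBr; lra.
have eps2_ge0 : 0 <= eps / 2 by lra.
have [res_le gap_abs_le] :=
  residual_gap_bounds (AA_gt0 k) Rad_gt0 ls_le eps2_ge0 (gap_le k) weak_duality.
split; last exact: gap_abs_le.
by replace (eps / (2 * Rad)) with (eps / 2 / Rad) by (field; lra).
Qed.

End Averages.

Section Growth.
Context {nu M : R}.
Hypotheses (nu01 : 0 <= nu <= 1) (M_gt0 : 0 < M).
Hypothesis grad_holder : forall l l',
  norm2 (vsub (grad A b xsel l) (grad A b xsel l')) <= M * powR (norm2 (vsub l l')) nu.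

(* Step 3 compared with the Hoelder descent guarantee at the step [u = a_(k+1)^2 / A_(k+1)]. *)
Lemma ln_step_growth k :
  ln (c_nu nu) + (1 - nu) / (1 + nu) * ln eps - 2 / (1 + nu) * ln M
  + ((1 + 3 * nu) / (1 + nu) - 1) * ln (AA k.+1) <= (1 + 3 * nu) / (1 + nu) * ln (a k.+1).
Proof.
have a1_gt0 := a_gt0 k; have W_gt0 := AA_gt0 k.
have s_gt0 : 0 < norm2 (g k) := norm2_gt0 _ (grad_neq0 k).
set a1 := a k.+1 in a1_gt0 *; set W := AA k.+1 in W_gt0 *; set s := norm2 (g k) in s_gt0.
have u_gt0 : 0 < a1 ^ 2 / W by apply: Rdiv_lt_0_compat => //; apply: pow_lt.
have dl_gt0 : 0 < eps * a1 / W by apply: Rdiv_lt_0_compat => //; apply: Rmult_lt_0_compat.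
have decrease : a1 ^ 2 / W * s ^ 2 / 2 + eps * a1 / W / 2
                <= M * Rpower (a1 ^ 2 / W * s) (1 + nu) / (1 + nu).
  have M_ge0 : 0 <= M by lra.
  have nu_ge0 : 0 <= nu by lra.
  have := phi_descent xsel_max nu_ge0 M_ge0 grad_holder (lam k) (a1 ^ 2 / W) u_gt0 s_gt0.
  have := phi_eta_le_ray k (a1 ^ 2 / W) (Rlt_le _ _ u_gt0).
  have [_ ->] := step3_eq k.
  rewrite -AA_step -/W -/a1 -/s.
  have -> : a1 ^ 2 / (2 * W) * s ^ 2 = a1 ^ 2 / W * s ^ 2 / 2 by field; lra.
  have -> : eps * a1 / (2 * W) = eps * a1 / W / 2 by field; lra.
  lra.
have := step_size_lower_bound nu M _ _ _ nu01 M_gt0 u_gt0 s_gt0 dl_gt0 decrease.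
have ln_u : ln (a1 ^ 2 / W) = 2 * ln a1 - ln W.
  by rewrite ln_div ?ln_pow //=; nra.
have ln_dl : ln (eps * a1 / W) = ln eps + ln a1 - ln W.
  by rewrite ln_div ?ln_mult //; apply: Rmult_lt_0_compat.
rewrite ln_u ln_dl.
have -> : (1 + 3 * nu) / (1 + nu) = 2 - (1 - nu) / (1 + nu) by field; lra.
lra.
Qed.

Lemma AA_ge_rate k : (1 <= k)%nat ->
  AA k >= c_nu nu * Rpower (INR k) ((1 + 3 * nu) / (1 + nu)) * Rpower eps ((1 - nu) / (1 + nu))
          / (Rpower 2 ((1 + 3 * nu) / (1 + nu)) * Rpower M (2 / (1 + nu))).
Proof.
move=> k_ge1; set p := (1 + 3 * nu) / (1 + nu).
have p_bounds : 1 <= p <= 2.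
  by rewrite /p; split; apply: (Rmult_le_reg_r (1 + nu)); try lra; field_simplify; lra.
have := ln_partial_sum_growth _ _ AA a (proj1 p_bounds) AA0 AA_step a_gt0 ln_step_growth k k_ge1.
case: k k_ge1 => [|k] // _; set W := AA k.+1 => ln_W.
have k_gt0 : 0 < INR k.+1 by apply: lt_0_INR; lia.
have ln_k2_le : ln (INR k.+1 / 2) <= ln (INR k.+1 / p).
  apply: ln_le; first lra.
  by apply: Rmult_le_compat_l; [lra | apply: Rinv_le_contravar; lra].
have c_gt0 : 0 < c_nu nu.
  by rewrite /c_nu; case: Rlt_dec => [nu_lt1 | nu_ge1] /=; [exact: exp_pos | lra].
set K := ln (c_nu nu) + (1 - nu) / (1 + nu) * ln eps - 2 / (1 + nu) * ln M in ln_W.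
have -> : c_nu nu * Rpower (INR k.+1) p * Rpower eps ((1 - nu) / (1 + nu))
          / (Rpower 2 p * Rpower M (2 / (1 + nu))) = exp (K + p * ln (INR k.+1 / 2)).
  rewrite ln_div //; last lra.
  rewrite /K /Rpower.
  rewrite (_ : _ + p * (ln (INR k.+1) - ln 2) = ln (c_nu nu) + p * ln (INR k.+1)
      + (1 - nu) / (1 + nu) * ln eps + - (p * ln 2) + - (2 / (1 + nu) * ln M)); last by ring.
  rewrite !exp_plus !exp_Ropp exp_ln //.
  by field; split; apply: Rgt_not_eq; apply: exp_pos.
rewrite -(exp_ln W); last exact: AA_gt0.
by apply/Rle_ge/exp_le; nra.
Qed.

End Growth.

End PDUGDsDR.

Theorem mainTheorem13 (n m : nat) (Q : vec n -> Prop) (f : vec n -> R)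
  (A : mat m n) (b : vec m) (nu M Rad eps : R) (xsel : vec m -> vec n)
  (lamstar : vec m)
  (beta : nat -> R) (lam eta zeta : nat -> vec m) (h a AA : nat -> R)
  (xhat : nat -> vec n) :
  convex_set Q -> closed_vset Q -> convex_on Q f ->
  (forall l : vec m, exists x, is_maximizer Q (lagr f A l) x) ->
  (forall l : vec m, is_maximizer Q (lagr f A l) (xsel l)) ->
  0 <= nu <= 1 -> 0 < M ->
  (forall l l' : vec m,
     norm2 (vsub (grad A b xsel l) (grad A b xsel l')) <= M * powR (norm2 (vsub l l')) nu) ->
  0 < Rad -> norm2 lamstar <= Rad ->
  (forall l : vec m, phi Q f A b lamstar <= phi Q f A b l) ->
  (exists xs : vec n, Q xs /\ mapply A xs = b /\
     (forall x, Q x -> mapply A x = b -> f xs <= f x) /\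
     f xs = - phi Q f A b lamstar) ->
  0 < eps ->
  PDUGDsDR_run Q f A b eps xsel beta lam eta zeta h a AA xhat ->
  forall k : nat, (1 <= k)%nat ->
    Q (xhat k) /\
    norm2 (vsub (mapply A (xhat k)) b) <= 2 * Rad / AA k + eps / (2 * Rad) /\
    Rabs (phi Q f A b (eta k) + f (xhat k)) <= 2 * Rad ^ 2 / AA k + eps / 2 /\
    AA k >= c_nu nu * Rpower (INR k) ((1 + 3 * nu) / (1 + nu))
                    * Rpower eps ((1 - nu) / (1 + nu))
            / (Rpower 2 ((1 + 3 * nu) / (1 + nu)) * Rpower M (2 / (1 + nu))).
Proof.
move=> Q_convex _ f_convex _ xsel_max nu01 M_gt0 grad_holder Rad_gt0 lamstar_le lamstar_opt _
  eps_gt0 run [|k] // _.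
have [xhat_Q _] := xhat_jensen xsel_max eps_gt0 run Q_convex f_convex k.
have [residual_le gap_le] :=
  residual_gap_le xsel_max eps_gt0 run Q_convex f_convex _ _ k Rad_gt0 lamstar_le lamstar_opt.
have rate := AA_ge_rate xsel_max eps_gt0 run nu01 M_gt0 grad_holder k.+1 isT.
by [].
Qed.
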